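(* Let $G=(V,E,L)$ be a graph with loops, let $\{i,i\}\in L^+$, and let $M\subseteq N(i)$ with $i\in M$; set $d:=|M|$. Consider the variables $z_p$, $p\in V\cup E\cup L$, together with auxiliary variables $z_S$ for all $S\subseteq M$ with $|S|\ge2$ and $S\notin E$. Then the set of all such vectors satisfying $$z_{ii}\ \ge\sum_{J\subseteq M:\, i\in J}\frac{\big(\ell_d(J,M\setminus J)\big)^2}{\ell_{d-1}(J\setminus\{i\},M\setminus J)},\qquad \ell_d(J,M\setminus J)\ge 0\quad\forall J\subseteq M$$ is a closed convex set. Moreover, its projection onto the space of variables $z_p$, $p\in V\cup E\cup L$, contains $\mathrm{QP}(G)$ (i.e., it is a convex relaxation of $\mathrm{QP}(G)$).
   Context: A graph with loops is $G=(V,E,L)$: $V$ finite node set, $E$ a set of unordered pairs of distinct nodes, $L$ a set of loops $\{i,i\}$ partitioned as $L=L^-\cup L^+$ (minus/plus loops). $\mathrm{QP}(G):=\mathrm{conv}\{z\in\mathbb{R}^{V\cup E\cup L}: z_{ii}\ge z_i^2\ \forall\{i,i\}\in L^+,\ z_{ii}\le z_i^2\ \forall \{i,i\}\in L^-,\ z_{ij}=z_iz_j\ \forall \{i,j\}\in E,\ z_i\in[0,1]\ \forall i\in V\}$. For a plus loop $\{i,i\}$, $N(i):=\{j\in V:\{i,j\}\in E\cup L\}$ (so $i\in N(i)$). For $S\subseteq M$: $z_\emptyset:=1$, $z_{\{k\}}:=z_k$, and for $|S|\ge2$, $z_S$ is the edge variable if $S\in E$ and the auxiliary variable otherwise (the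 loop variable $z_{ii}$ is distinct). For disjoint $J_1,J_2$ with $|J_1\cup J_2|=d$, $\ell_d(J_1,J_2):=\sum_{t\subseteq J_2}(-1)^{|t|}z_{J_1\cup t}$. Each $u^2/v$ denotes the closed perspective: $u^2/v$ if $v>0$, $0$ if $u=v=0$, $+\infty$ if $u\neq0,v=0$. *)

From mathcomp Require Import all_boot all_order all_algebra.
From mathcomp Require Import all_classical all_reals all_analysis.
Set Implicit Arguments. Unset Strict Implicit. Unset Printing Implicit Defensive.
Import Order.TTheory GRing.Theory Num.Theory.
Local Open Scope ring_scope.

(* A graph with loops G = (V, E, L), L = Lm ∪ Lp, is given by
   V : finType, E : {set {set V}} (unordered pairs of distinct nodes),
   Lm, Lp : {set V} (the nodes carrying a minus / plus loop). *)

Section GraphVars.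
Variables (V : finType) (E : {set {set V}}) (L : {set V}) (M : {set V}).

Definition edgeT := {e : {set V} | e \in E}.
Definition loopT := {k : V | k \in L}.
Definition auxT := {S : {set V} | [&& S \subset M, (1 < #|S|)%N & S \notin E]}.
Definition origT := (V + edgeT + loopT)%type.
Definition fullT := (origT + auxT)%type.

Variable R : realType.

Definition zV (z : origT -> R) (k : V) : R := z (inl (inl k)).
(* edge variable z_S (for S ∈ E; 0 otherwise, never used) *)
Definition zE (z : origT -> R) (S : {set V}) : R :=
  match @insub _ (fun e : {set V} => e \in E) edgeT S with
  | Some e => z (inl (inr e)) | None => 0 end.
(* loop variable z_kk (for k ∈ L; 0 otherwise, never used) *)
Definition zL (z : origT -> R) (k : V) : R :=
  match @insub _ (fun k : V => k \in L) loopT k with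
  | Some l => z (inr l) | None => 0 end.

Definition zS (z : origT -> R) (a : auxT -> R) (S : {set V}) : R :=
  if #|S| == 0%N then 1
  else if #|S| == 1%N then
    (if [pick k in S] is Some k then zV z k else 0)
  else if S \in E then zE z S
  else match @insub _ (fun S : {set V} => [&& S \subset M, (1 < #|S|)%N & S \notin E]) auxT S with
       | Some s => a s | None => 0 end.

(* ℓ_d(J1,J2) = Σ_{t ⊆ J2} (-1)^|t| z_{J1 ∪ t}   (d = |J1 ∪ J2| is only a label) *)
Definition ell (z : origT -> R) (a : auxT -> R) (J1 J2 : {set V}) : R :=
  \sum_(t : {set V} | t \subset J2) (-1) ^+ #|t| * zS z a (J1 :|: t).

End GraphVars.

(* closed perspective u^2/v, valued in the extended reals *)
Definition persp (R : realType) (u v : R) : \bar R :=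
  if 0 < v then ((u ^+ 2) / v)%:E
  else if (u == 0) && (v == 0) then 0%E else +oo%E.

Definition nbhd (V : finType) (E : {set {set V}}) (L : {set V}) (i : V) : {set V} :=
  [set j | ([set i; j] \in E) || ((j == i) && (i \in L))].

Definition convex_hull (R : realType) (T : Type) (A : set (T -> R)) : set (T -> R) :=
  [set x | exists (n : nat) (w : 'I_n -> R) (p : 'I_n -> (T -> R)),
      (forall k, 0 <= w k) /\ \sum_(k < n) w k = 1 /\
      (forall k, A (p k)) /\ x = \sum_(k < n) w k *: p k].

Definition QP_points (R : realType) (V : finType) (E : {set {set V}}) (Lm Lp : {set V})
  : set (origT E (Lm :|: Lp) -> R) :=
  [set z | (forall k, k \in Lp -> zV z k ^+ 2 <= zL z k) /\
           (forall k, k \in Lm -> zL z k <= zV z k ^+ 2) /\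
           (forall j k, j != k -> [set j; k] \in E -> zE z [set j; k] = zV z j * zV z k) /\
           (forall k, 0 <= zV z k <= 1)].

Definition QP (R : realType) (V : finType) (E : {set {set V}}) (Lm Lp : {set V}) :=
  convex_hull (@QP_points R V E Lm Lp).

Definition relax (R : realType) (V : finType) (E : {set {set V}}) (Lm Lp : {set V})
  (M : {set V}) (i : V) : set (fullT E (Lm :|: Lp) M -> R) :=
  [set x : fullT E (Lm :|: Lp) M -> R |
     let z := fun p => x (inl p) in let a := fun s => x (inr s) in
     (\sum_(J : {set V} | (J \subset M) && (i \in J))
         persp (ell z a J (M :\: J)) (ell z a (J :\: [set i]) (M :\: J))
       <= (zL z i)%:E)%E /\
     (forall J : {set V}, J \subset M -> 0 <= ell z a J (M :\: J))].

From mathcomp Require Import all_boot all_order all_algebra.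
From mathcomp Require Import all_classical all_reals all_analysis.
From mathcomp Require Import ring lra.
Import Order.TTheory GRing.Theory Num.Theory.
Set Implicit Arguments. Unset Strict Implicit. Unset Printing Implicit Defensive.
Local Open Scope ring_scope.

(* The closed perspective is a supremum of affine functions: persp u v is the
   supremum over b of b u - b^2 v / 4, attained at b = 2u/v when v > 0, and
   these values are unbounded exactly when persp u v = +oo.  The relaxation is
   therefore an intersection of closed half-spaces in finitely many variables,
   hence closed and convex.  A generating point z of QP(G) lifts by
   z_S := prod_(k in S) z_k; then l(J, M\J) = prod_J z_k * prod_(M\J) (1 - z_k)
   is nonnegative and equals z_i l(J\{i}, M\J), so the perspective sum is z_i^2
   times the total mass of a product distribution on the subsets of M
   containing i, i.e. z_i^2 <= z_ii.  Convexity of the relaxation takes care of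
   convex combinations of such points. *)

Section AffineFunctions.
Variables (R : realType) (T : finType).
Local Open Scope classical_set_scope.

Definition affine (F : (T -> R) -> R) :=
  exists (c : R) (coef : T -> R), forall x, F x = c + \sum_p coef p * x p.

Lemma affine_cst c : affine (fun _ => c).
Proof. by exists c, (fun _ => 0) => x; rewrite big1 ?addr0 // => p _; rewrite mul0r. Qed.

Lemma affine_proj q : affine (fun x => x q).
Proof.
exists 0, (fun p => (p == q)%:R) => x.
by rewrite add0r (bigD1 q) //= eqxx mul1r big1 ?addr0 // => p /negbTE ->; rewrite mul0r.
Qed.

Lemma affineD F G : affine F -> affine G -> affine (fun x => F x + G x).
Proof.
move=> [c [f eF]] [d [g eG]]; exists (c + d), (fun p => f p + g p) => x.
under eq_bigr do rewrite mulrDl.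
by rewrite big_split eF eG /=; ring.
Qed.

Lemma affineZ a F : affine F -> affine (fun x => a * F x).
Proof.
move=> [c [f eF]]; exists (a * c), (fun p => a * f p) => x.
by rewrite eF mulrDr mulr_sumr; under eq_bigr do rewrite mulrA.
Qed.

Lemma affineN F : affine F -> affine (fun x => - F x).
Proof.
move=> [c [f eF]]; exists (- c), (fun p => - f p) => x.
by rewrite eF opprD -sumrN; under [in RHS]eq_bigr do rewrite mulNr.
Qed.

Lemma affine_sum (I : Type) (r : seq I) (P : pred I) (F : I -> (T -> R) -> R) :
  (forall j, P j -> affine (F j)) -> affine (fun x => \sum_(j <- r | P j) F j x).
Proof.
move=> affF; elim: r => [|j r IHr].
  by under [X in affine X]funext do rewrite big_nil; exact: affine_cst.
under [X in affine X]funext do rewrite big_cons.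
by case: (boolP (P j)) => Pj //; exact: affineD (affF _ Pj) IHr.
Qed.

Lemma affine_convex_comb F n (w : 'I_n -> R) (X : 'I_n -> T -> R) :
  affine F -> \sum_k w k = 1 -> F (\sum_k w k *: X k) = \sum_k w k * F (X k).
Proof.
move=> [c [f eF]] w1; rewrite eF fct_sumE.
under [RHS]eq_bigr do rewrite eF mulrDr.
rewrite big_split /= -mulr_suml w1 mul1r; congr (_ + _).
under eq_bigr do rewrite mulr_sumr.
rewrite exchange_big /=; apply: eq_bigr => k _; rewrite mulr_sumr.
by apply: eq_bigr => p _ /=; rewrite mulrCA.
Qed.

Lemma closed_affine_le0 F : affine F -> closed ([set x | F x <= 0] : set {ptws T -> R^o}).
Proof.
move=> [c [f eF]].
have -> : [set x | F x <= 0] =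
    (fun x => \sum_p f p * x p) @^-1` [set y : R^o | y <= - c].
  by apply/seteqP; split => x /=; rewrite eF; lra.
apply: closed_comp; last exact: closed_le.
move=> x _; apply: (@continuous_big R^o T +%R 0 predT add_continuous) => p _ {}x.
apply: (continuous_comp (@proj_continuous T (fun _ => R^o) p x)).
exact: mulrl_continuous.
Qed.

End AffineFunctions.

Arguments affine_proj {R T}.

Section HalfspaceIntersection.
Variables (R : realType) (T : finType) (I : Type) (F : I -> (T -> R) -> R).
Hypothesis affineF : forall j, affine (F j).
Local Open Scope classical_set_scope.

Definition halfspace_cap : set (T -> R) := [set x | forall j, F j x <= 0].

Lemma closed_halfspace_cap : closed (halfspace_cap : set {ptws T -> R^o}).
Proof.
have -> : (halfspace_cap : set {ptws T -> R^o}) =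
    \bigcap_(j in setT) [set x | F j x <= 0].
  by apply/seteqP; split => [x Fx j _ | x Fx j]; apply: Fx.
by apply: closed_bigI => j _; exact: closed_affine_le0.
Qed.

Lemma halfspace_cap_convex_comb n (w : 'I_n -> R) (X : 'I_n -> T -> R) :
  (forall k, 0 <= w k) -> \sum_k w k = 1 -> (forall k, halfspace_cap (X k)) ->
  halfspace_cap (\sum_k w k *: X k).
Proof.
move=> w0 w1 XF j; rewrite (affine_convex_comb X (affineF j) w1).
by apply: sumr_le0 => k _; exact: mulr_ge0_le0 (w0 k) (XF k j).
Qed.

Lemma convex_halfspace_cap : convex_set halfspace_cap.
Proof.
move=> x y l /set_mem xF /set_mem yF; apply/mem_set.
pose w (k : 'I_2) := if k == ord0 then l%:num else 1 - l%:num.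
pose X (k : 'I_2) := if k == ord0 then x else y.
have -> : conv l x y = \sum_k w k *: X k by rewrite !big_ord_recr big_ord0 /= add0r.
apply: halfspace_cap_convex_comb => [k||k].
- by rewrite /w; case: ifP; rewrite // subr_ge0.
- by rewrite !big_ord_recr big_ord0 /= add0r /w /= addrC subrK.
- by rewrite /X; case: ifP.
Qed.

End HalfspaceIntersection.

Section Perspective.
Variable R : realType.
Implicit Types b u v : R.

Definition persp_minorant b u v := b * u - b ^+ 2 * v / 4.

Lemma persp_minorant_le b u v : ((persp_minorant b u v)%:E <= persp u v)%E.
Proof.
rewrite /persp /persp_minorant; case: ifPn => [v0|_].
  rewrite lee_fin ler_pdivlMr // -subr_ge0.
  have -> : u ^+ 2 - (b * u - b ^+ 2 * v / 4) * v = (u - b * v / 2) ^+ 2 by field.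
  exact: sqr_ge0.
case: ifPn => [/andP[/eqP -> /eqP ->]|_]; last exact: leey.
by rewrite !(mulr0, mul0r, subr0).
Qed.

Lemma persp_minorant_attained u v : persp u v != +oo%E ->
  persp u v = (persp_minorant (if 0 < v then 2 * u / v else 0) u v)%:E.
Proof.
rewrite /persp /persp_minorant; case: ifPn => [v0 _|_].
  by congr (_%:E); field; rewrite gt_eqF.
by case: ifPn => [/andP[/eqP -> /eqP ->] _|//]; rewrite !(mulr0, mul0r, subr0).
Qed.

Lemma persp_minorant_unbounded u v K : persp u v = +oo%E ->
  exists b, K < persp_minorant b u v.
Proof.
rewrite /persp /persp_minorant; case: ifPn => // /negbTE v_le0.
case: ifPn => // uv0 _.
have hv : v <= 0 by rewrite leNgt v_le0.
have hK : K < `|K| + 1 by rewrite (le_lt_trans (ler_norm K)) ?ltrDl.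
have [u0|/negPf u0] := eqVneq u 0.
  have v0 : v < 0 by rewrite lt_neqAle hv andbT; apply: contra uv0 => ->; rewrite u0 eqxx.
  exists (4 * (`|K| + 1) / - v + 1); rewrite u0 mulr0 sub0r.
  set b := 4 * _ / _; have hb : b * - v = 4 * (`|K| + 1).
    by rewrite /b mulrVK // unitfE oppr_eq0 lt_eqF.
  have : 0 <= b by rewrite /b divr_ge0 ?mulr_ge0 ?addr_ge0 ?oppr_ge0 // ltW.
  rewrite expr2; nra.
exists ((`|K| + 1) / u); rewrite divfK ?u0 //.
have : ((`|K| + 1) / u) ^+ 2 * v / 4 <= 0.
  by rewrite mulr_le0_ge0 // mulr_ge0_le0 // sqr_ge0.
lra.
Qed.

Lemma sum_persp_le (I : finType) (P : pred I) (u v : I -> R) (t : R) :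
  (\sum_(j | P j) persp (u j) (v j) <= t%:E)%E <->
  (forall b : I -> R, \sum_(j | P j) persp_minorant (b j) (u j) (v j) <= t).
Proof.
split=> [le_t b | minorant_le].
  rewrite -lee_fin -sumEFin; apply: le_trans le_t.
  by apply: lee_sum => j _; exact: persp_minorant_le.
have [[j Pj uvj]|finite] := pselect (exists2 j, P j & persp (u j) (v j) = +oo%E).
  have [b bj] := persp_minorant_unbounded t uvj.
  have := minorant_le (fun k => if k == j then b else 0).
  rewrite (bigD1 j) //= eqxx big1 ?addr0 => [|k /andP[_ /negbTE ->]].
    by rewrite leNgt bj.
  by rewrite /persp_minorant !mul0r expr0n mul0r mul0r subr0.
pose b j := if 0 < v j then 2 * u j / v j else 0.
rewrite (eq_bigr (fun j => (persp_minorant (b j) (u j) (v j))%:E)) => [|j Pj].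
  by rewrite sumEFin lee_fin minorant_le.
by apply: persp_minorant_attained; apply/eqP => uvj; apply: finite; exists j.
Qed.

Lemma persp_scale (c w : R) : 0 <= w -> persp (c * w) w = (c ^+ 2 * w)%:E.
Proof.
rewrite le_eqVlt /persp => /predU1P[<-|w_gt0]; first by rewrite ltxx mulr0 eqxx mulr0.
by rewrite w_gt0; congr (_%:E); field; rewrite gt_eqF.
Qed.

Lemma affine_persp_minorant (T : finType) b (U W : (T -> R) -> R) :
  affine U -> affine W -> affine (fun x => persp_minorant b (U x) (W x)).
Proof.
move=> affU affW.
have -> : (fun x => persp_minorant b (U x) (W x)) = (fun x => b * U x + - (b ^+ 2 / 4) * W x).
  by apply/funext => x; rewrite /persp_minorant; ring.
exact: affineD (affineZ b affU) (affineZ _ affW).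
Qed.

End Perspective.

Section SubsetExpansion.
Variables (R : comPzRingType) (I : finType).

Lemma sum_subsets_prod (A : {set I}) (a b : I -> R) :
  \sum_(t : {set I} | t \subset A) (\prod_(k in t) a k * \prod_(k in A :\: t) b k) =
  \prod_(k in A) (a k + b k).
Proof.
rewrite big_mkcond [RHS]big_mkcond /=.
have -> : \prod_k (if k \in A then a k + b k else 1) =
    \prod_k ((if k \in A then a k else 0) + (if k \in A then b k else 1)).
  by apply: eq_bigr => k _; case: (k \in A); rewrite ?add0r.
rewrite bigA_distr; apply: eq_bigr => t _.
case: ifPn => [tA|/fintype.subsetPn[k kt kA]]; last first.
  by rewrite (bigD1 k) //= kt (negbTE kA) mul0r.
rewrite big_mkcond [X in _ * X]big_mkcond -big_split /=.
apply: eq_bigr => k _; rewrite finset.in_setD.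
case: ifP => [kt|_]; first by rewrite (fintype.subsetP tA _ kt) mulr1.
by rewrite mul1r; case: ifP.
Qed.

Lemma sum_subsets_mem_prod (A : {set I}) (i : I) (a b : I -> R) : i \in A ->
  \sum_(t : {set I} | (t \subset A) && (i \in t))
     (\prod_(k in t :\ i) a k * \prod_(k in A :\: t) b k) =
  \prod_(k in A :\ i) (a k + b k).
Proof.
(* Forcing i into t, i.e. a i := 1 and b i := 0, reduces this to sum_subsets_prod. *)
move=> iA; pose a' k := if k == i then 1 else a k; pose b' k := if k == i then 0 else b k.
have := sum_subsets_prod A a' b'.
rewrite (big_setD1 i iA) /= {2}/a' {2}/b' eqxx addr0 mul1r.
have a'b'E : \prod_(k in A :\ i) (a' k + b' k) = \prod_(k in A :\ i) (a k + b k).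
  by apply: eq_bigr => k; rewrite !inE /a' /b' => /andP[/negbTE ->].
rewrite a'b'E (bigID (fun t : {set I} => i \in t)) /=.
rewrite [X in _ + X]big1 => [|t /andP[_ it]]; last first.
  by rewrite [X in _ * X](big_setD1 i) ?inE ?iA ?it //= /b' eqxx mul0r mulr0.
rewrite addr0 => <-; apply: eq_bigr => t /andP[_ it].
rewrite (big_setD1 i it) /= /a' eqxx mul1r; congr (_ * _).
  by apply: eq_bigr => k; rewrite !inE => /andP[/negbTE ->].
by apply: eq_bigr => k; rewrite !inE /b' => /andP[kt _]; case: eqP kt => // ->; rewrite it.
Qed.

End SubsetExpansion.

Section RelaxationConstraints.
Variables (R : realType) (V : finType) (E : {set {set V}}) (Lm Lp : {set V}).
Variables (i : V) (M : {set V}).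

Local Notation FT := (fullT E (Lm :|: Lp) M).

Definition orig_part (x : FT -> R) : origT E (Lm :|: Lp) -> R := fun p => x (inl p).
Definition aux_part (x : FT -> R) : auxT E M -> R := fun s => x (inr s).

Lemma affine_zS S : affine (fun x : FT -> R => zS (orig_part x) (aux_part x) S).
Proof.
rewrite /zS /zE; case: (#|S| == 0%N); first exact: affine_cst.
case: (#|S| == 1%N).
  by case: [pick k in S] => [k|]; [exact: affine_proj | exact: affine_cst].
case: (S \in E); first by case: insub => [e|]; [exact: affine_proj | exact: affine_cst].
by case: insub => [s|]; [exact: affine_proj | exact: affine_cst].
Qed.

Lemma affine_ell J1 J2 : affine (fun x : FT -> R => ell (orig_part x) (aux_part x) J1 J2).
Proof. by apply: affine_sum => t _; apply: affineZ; exact: affine_zS. Qed.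

Lemma affine_zL k : affine (fun x : FT -> R => zL (orig_part x) k).
Proof. by rewrite /zL; case: insub => [l|]; [exact: affine_proj | exact: affine_cst]. Qed.

Definition relax_constraint (c : ({set V} -> R) + {J : {set V} | J \subset M})
    (x : FT -> R) : R :=
  let z := orig_part x in let a := aux_part x in
  match c with
  | inl b => \sum_(J : {set V} | (J \subset M) && (i \in J))
      persp_minorant (b J) (ell z a J (M :\: J)) (ell z a (J :\: [set i]) (M :\: J))
      - zL z i
  | inr J => - ell z a (val J) (M :\: val J)
  end.

Lemma affine_relax_constraint c : affine (relax_constraint c).
Proof.
case: c => [b|J] /=; last exact/affineN/affine_ell.
apply: affineD; last exact/affineN/affine_zL.
by apply: affine_sum => J _; apply: affine_persp_minorant; exact: affine_ell.
Qed.

Lemma relaxE : @relax R V E Lm Lp M i = halfspace_cap relax_constraint.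
Proof.
apply/seteqP; split => x /=.
  move=> [/sum_persp_le minorant_le ell_ge0] [b|J] /=; first by rewrite subr_le0.
  by rewrite oppr_le0; apply: ell_ge0 (valP J).
move=> constraint_le0; split.
  by apply/sum_persp_le => b; rewrite -subr_le0; exact: (constraint_le0 (inl b)).
by move=> J JM; rewrite -oppr_le0; exact: (constraint_le0 (inr (exist _ J JM))).
Qed.

End RelaxationConstraints.

Section ProductLift.
Variables (R : realType) (V : finType) (E : {set {set V}}) (L M : {set V}).
Hypothesis edges_are_pairs : forall e, e \in E -> exists j k : V, j != k /\ e = [set j; k].
Variable q : origT E L -> R.
Hypothesis edge_prod :
  forall j k, j != k -> [set j; k] \in E -> zE q [set j; k] = zV q j * zV q k.

Definition aux_prod : auxT E M -> R := fun s => \prod_(k in val s) zV q k.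

Definition prod_lift : fullT E L M -> R :=
  fun y => match y with inl p => q p | inr s => aux_prod s end.

Lemma zS_lift (S : {set V}) : S \subset M -> zS q aux_prod S = \prod_(k in S) zV q k.
Proof.
move=> SM; rewrite /zS; case: ifP => [/eqP/cards0_eq ->|S_ne0]; first by rewrite big_set0.
case: ifP => [/cards1P[k ->]|S_ne1].
  by case: pickP => [k'|/(_ k)]; rewrite inE ?eqxx // => /eqP ->; rewrite big_set1.
case: ifP => [SE|SnE].
  have [j [k [jk eS]]] := edges_are_pairs SE; rewrite eS in SE *.
  by rewrite edge_prod // big_setU1 ?inE // big_set1.
case: insubP => [s _ <- //|]; rewrite SM SnE andbT /=.
by move: S_ne0 S_ne1; case: #|S| => [|[|]].
Qed.

Lemma ell_lift (J1 J2 : {set V}) : [disjoint J1 & J2] -> J1 :|: J2 \subset M ->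
  ell q aux_prod J1 J2 = \prod_(k in J1) zV q k * \prod_(k in J2) (1 - zV q k).
Proof.
move=> J12 J12M; transitivity (\prod_(k in J1) zV q k *
    \sum_(t : {set V} | t \subset J2) (\prod_(k in t) - zV q k * \prod_(k in J2 :\: t) 1)).
  rewrite mulr_sumr; apply: eq_bigr => t tJ2.
  rewrite zS_lift; last exact: fintype.subset_trans (finset.setUS J1 tJ2) J12M.
  rewrite (eq_bigl [predU J1 & t]) => [|k]; last by rewrite !inE.
  rewrite bigU /=; last exact: disjointWr J12.
  by rewrite big1_eq prodrN; ring.
rewrite (sum_subsets_prod J2 (fun k => - zV q k) (fun=> 1)); congr (_ * _).
by apply: eq_bigr => k _; rewrite addrC.
Qed.

End ProductLift.

Section QPInRelaxation.
Variables (R : realType) (V : finType) (E : {set {set V}}) (Lm Lp : {set V}).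
Variables (i : V) (M : {set V}).
Hypothesis edges_are_pairs : forall e, e \in E -> exists j k : V, j != k /\ e = [set j; k].

Lemma relax_lift (q : origT E (Lm :|: Lp) -> R) : @QP_points R V E Lm Lp q ->
  i \in Lp -> i \in M -> @relax R V E Lm Lp M i (prod_lift q).
Proof.
move=> [sq_le [_ [edge_prod z01]]] iLp iM.
have z_ge0 k : 0 <= zV q k by case/andP: (z01 k).
have one_sub_z_ge0 k : 0 <= 1 - zV q k by rewrite subr_ge0; case/andP: (z01 k).
have ellE (J' J : {set V}) : J' \subset J -> J \subset M ->
    ell q (aux_prod (M := M) q) J' (M :\: J) =
    \prod_(k in J') zV q k * \prod_(k in M :\: J) (1 - zV q k).
  move=> J'J JM; apply: ell_lift => //.
    rewrite finset.disjoints_subset; apply/fintype.subsetP => k kJ'.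
    by rewrite !inE (fintype.subsetP J'J).
  by rewrite finset.subUset finset.subsetDl (fintype.subset_trans J'J JM).
split=> [|J JM]; last by rewrite ellE // mulr_ge0 // prodr_ge0.
rewrite (eq_bigr (fun J => (zV q i ^+ 2 *
    (\prod_(k in J :\ i) zV q k * \prod_(k in M :\: J) (1 - zV q k)))%:E)) => [|J /andP[JM iJ]].
  rewrite sumEFin -mulr_sumr (sum_subsets_mem_prod (zV q) (fun k => 1 - zV q k) iM).
  by rewrite big1 => [|k _]; [rewrite mulr1 lee_fin; exact: sq_le | rewrite addrC subrK].
rewrite !ellE ?finset.subsetDl // (big_setD1 i iJ) /= -mulrA persp_scale //.
by rewrite mulr_ge0 // prodr_ge0.
Qed.

End QPInRelaxation.

Unset Implicit Arguments.

Theorem proposition5 (R : realType) (V : finType) (E : {set {set V}})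
  (Lm Lp : {set V}) (i : V) (M : {set V}) :
  (forall e, e \in E -> exists j k : V, j != k /\ e = [set j; k]) ->
  [disjoint Lm & Lp] ->
  i \in Lp ->
  M \subset @nbhd V E (Lm :|: Lp) i ->
  i \in M ->
  closed (@relax R V E Lm Lp M i : set {ptws @fullT V E (Lm :|: Lp) M -> R^o}) /\
  convex_set (@relax R V E Lm Lp M i) /\
  (@QP R V E Lm Lp `<=` (fun x => x \o inl) @` @relax R V E Lm Lp M i)%classic.
Proof.
move=> edges_are_pairs _ iLp _ iM; rewrite relaxE.
have affine_constraints := @affine_relax_constraint R V E Lm Lp i M.
split; first exact: closed_halfspace_cap.
split; first exact: convex_halfspace_cap.
move=> _ [n [w [p [w_ge0 [w_sum1 [pQP ->]]]]]].
exists (\sum_k w k *: prod_lift (M := M) (p k)).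
  apply: halfspace_cap_convex_comb => // k; rewrite -relaxE.
  exact: relax_lift.
by apply/funext => o; rewrite /= !fct_sumE.
Qed.
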